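(* Let $(X,e\colon X\to M\otimes X)$ be a coalgebra for $F$ on $\mathbf{Met_3}^{C}$ and let $f\colon X\to S$ be given by $f(x)=\lim_{n\to\infty}\theta_n(x)$, where for $x\in X$: $\chi_0=x$, $\chi_n=(M^{n-1}\otimes e)(\chi_{n-1})$, $m_0,m_1,\ldots\in M$ are chosen with $\chi_n=m_0\otimes\cdots\otimes m_{n-1}\otimes x_n$ for all $n$, and $\theta_n(x)=m_0\otimes\cdots\otimes m_{n-1}\otimes z\in G$ for a fixed $z\in\{T,L,R\}$ (this limit exists and does not depend on the choices). Then $s\circ f=(M\otimes f)\circ e$.
   Context: A tripointed metric space is a set with three distinct points $T,L,R$ and a metric bounded by $1$ in which $T,L,R$ have pairwise distance $1$. $\mathbf{Met_3}^{C}$: tripointed metric spaces with continuous maps preserving $T,L,R$. Let $M=\{a,b,c\}$. $M\times X$ has metric $\tfrac12d(x,y)$ within a copy and $1$ between copies; $M\otimes X$ is the quotient metric space by the equivalence relation generated by $(b,T)\sim(a,L)$, $(a,R)\sim(c,T)$, $(c,L)\sim(b,R)$, elements $m\otimes x$, distinguished points $a\otimes T,b\otimes L,c\otimes R$; $F=M\otimes-$, $(M\otimes f)(m\otimes x)=m\otimes f(x)$; $M^n\otimes-$ is the $n$-fold iterate. A coalgebra is $(X,e\colon X\to FX)$. With $I=\{T,L,R\}$ discrete and $!\colon I\to FI$ ($T\mapsto a\otimes T$, $L\mapsto b\otimes L$, $R\mapsto c\otimes R$), $G$ is the metric union of the chain of isometric embeddings $I\to FI\to F^2I\to\cdots$ (elements: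 expressions $m_0\otimes\cdots\otimes m_{n-1}\otimes z$ modulo induced identifications), and $g\colon M\otimes G\to G$, $g(m\otimes w)=m\otimes w$, is a bijective isometry. $S$ is the Cauchy completion of $G$ (distinguished points $T,L,R$). The completion of $g$ yields a bijective isometry $\psi\colon M\otimes S\to S$ and $s=\psi^{-1}\colon S\to M\otimes S$; explicitly, if $w_n=m\otimes w_n'\in G$ for all $n$ and $(w_n)$ converges in $S$, then $s(\lim_n w_n)=m\otimes\lim_n w_n'$. *)

From Stdlib Require Import Reals List ClassicalEpsilon.
From Coquelicot Require Import Coquelicot.
Import ListNotations.
Open Scope R_scope.

Inductive Mlet : Type := ma | mb | mc.

Definition Mlet_eqb (x y : Mlet) : bool :=
  match x, y with
  | ma, ma | mb, mb | mc, mc => true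
  | _, _ => false
  end.

(** ** Quotient pseudometric on M x C  (the object M (x) C).
    C carries a pseudometric [d] and three distinguished points T L R. *)
Section Tensor.
Context {C : Type} (d : C -> C -> R) (pT pL pR : C).

Definition prod_dist (p q : Mlet * C) : R :=
  if Mlet_eqb (fst p) (fst q) then d (snd p) (snd q) / 2 else 1.

Definition glued (p q : Mlet * C) : Prop :=
  (p = (mb, pT) /\ q = (ma, pL)) \/ (p = (ma, pR) /\ q = (mc, pT)) \/
  (p = (mc, pL) /\ q = (mb, pR)).

(* the equivalence relation they generate (already transitive) *)
Definition glue_rel (p q : Mlet * C) : Prop := p = q \/ glued p q \/ glued q p.

Fixpoint chain_ok (p q : Mlet * C) (l : list ((Mlet * C) * (Mlet * C))) : Prop :=
  match l with
  | [] => glue_rel p q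
  | xy :: l' => glue_rel p (fst xy) /\ chain_ok (snd xy) q l'
  end.

Definition chain_cost (l : list ((Mlet * C) * (Mlet * C))) : R :=
  fold_right (fun xy acc => prod_dist (fst xy) (snd xy) + acc) 0 l.

Definition qdist (p q : Mlet * C) : R :=
  real (Glb_Rbar (fun r => exists l, chain_ok p q l /\ r = chain_cost l)).

End Tensor.

(** ** Iterates F^n C = M (x) ... (x) M (x) C, represented on words:
    the element m_0 (x) ... (x) m_{n-1} (x) x is represented by ([m_0;...;m_{n-1}], x). *)
Fixpoint iter_dist {C : Type} (d : C -> C -> R) (pT pL pR : C) (n : nat)
  : list Mlet * C -> list Mlet * C -> R :=
  match n with
  | O => fun p q => d (snd p) (snd q)
  | S k => fun p q =>
      qdist (iter_dist d pT pL pR k)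
        (repeat ma k, pT) (repeat mb k, pL) (repeat mc k, pR)
        (hd ma (fst p), (tl (fst p), snd p))
        (hd ma (fst q), (tl (fst q), snd q))
  end.

Record TriMet : Type := {
  tcar :> Type;
  tdist : tcar -> tcar -> R;
  tT : tcar; tL : tcar; tR : tcar;
  tdist_ge0 : forall x y, 0 <= tdist x y;
  tdist_le1 : forall x y, tdist x y <= 1;
  tdist_eq0 : forall x y, tdist x y = 0 <-> x = y;
  tdist_sym : forall x y, tdist x y = tdist y x;
  tdist_tri : forall x y z, tdist x z <= tdist x y + tdist y z;
  tdist_TL : tdist tT tL = 1;
  tdist_LR : tdist tL tR = 1;
  tdist_TR : tdist tT tR = 1
}.

Definition tensor_dist (X : TriMet) : Mlet * X -> Mlet * X -> R :=
  qdist (tdist X) (tT X) (tL X) (tR X).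

(** coalgebra e : X -> M (x) X in Met_3^C: continuous, preserves T, L, R
    (equality in the quotient = quotient distance 0) *)
Definition is_coalgebra (X : TriMet) (e : X -> Mlet * X) : Prop :=
  (forall x eps, 0 < eps -> exists delta, 0 < delta /\
      forall y, tdist X x y < delta -> tensor_dist X (e x) (e y) < eps) /\
  tensor_dist X (e (tT X)) (ma, tT X) = 0 /\
  tensor_dist X (e (tL X)) (mb, tL X) = 0 /\
  tensor_dist X (e (tR X)) (mc, tR X) = 0.

Fixpoint chi {X : Type} (e : X -> Mlet * X) (x : X) (n : nat) : list Mlet * X :=
  match n with
  | O => ([], x)
  | S k => let p := chi e x k in (fst p ++ [fst (e (snd p))], snd (e (snd p)))
  end.

Definition word (m : nat -> Mlet) (n : nat) : list Mlet := map m (seq 0 n).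

Inductive Ipt : Type := iT | iL | iR.

Definition Ipt_eqb (x y : Ipt) : bool :=
  match x, y with
  | iT, iT | iL, iL | iR, iR => true
  | _, _ => false
  end.

Definition dI (x y : Ipt) : R := if Ipt_eqb x y then 0 else 1.

(* ! : I -> F I :  T |-> a(x)T, L |-> b(x)L, R |-> c(x)R *)
Definition bang_letter (z : Ipt) : Mlet :=
  match z with iT => ma | iL => mb | iR => mc end.

Definition G : Type := list Mlet * Ipt.

(* image of an element of F^k I in F^N I (N >= k) under the chain embeddings *)
Definition embed (N : nat) (p : G) : G :=
  (fst p ++ repeat (bang_letter (snd p)) (N - length (fst p)), snd p).

(* metric of G: distance computed in F^N I for N large enough *)
Definition dG (p q : G) : R :=
  let N := Nat.max (length (fst p)) (length (fst q)) in
  iter_dist dI iT iL iR N (embed N p) (embed N q).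

(** ** S: the Cauchy completion of G (Cauchy sequences, distance = limit;
    equality in S = distance 0) *)
Definition Sc : Type := nat -> G.

Definition cauchyG (u : Sc) : Prop :=
  forall eps, 0 < eps -> exists N, forall n m, (N <= n)%nat -> (N <= m)%nat ->
    dG (u n) (u m) < eps.

Definition dS (u v : Sc) : R := real (Lim_seq (fun n => dG (u n) (v n))).

Definition sT : Sc := fun _ => ([], iT).
Definition sL : Sc := fun _ => ([], iL).
Definition sR : Sc := fun _ => ([], iR).

Definition dMS : Mlet * Sc -> Mlet * Sc -> R := qdist dS sT sL sR.

(* psi : M (x) S -> S, the completion of g(m (x) w) = m (x) w *)
Definition psi (p : Mlet * Sc) : Sc :=
  fun n => (fst p :: fst (snd p n), snd (snd p n)).

(* s = psi^{-1} : S -> M (x) S *)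
Definition s_map (y : Sc) : Mlet * Sc :=
  epsilon (inhabits (ma, sT)) (fun p => cauchyG (snd p) /\ dS (psi p) y = 0).

Definition theta (z : Ipt) (m : nat -> Mlet) (n : nat) : G := (word m n, z).

Definition f_map {X : Type} (z : Ipt) (ch : X -> (nat -> Mlet) * (nat -> X)) (x : X) : Sc :=
  theta z (fst (ch x)).

(* The quotient distance of M (x) C has a closed form, from which
   every F^n C is again a tripointed pseudometric space and G is isometric to
   M (x) G.  Passing to the completion, two points m (x) u and m' (x) v of
   M (x) S whose images under psi are at distance 0 are themselves at distance 0;
   so it suffices to show psi (e_1(x) (x) f(x')) = f(x), where x' = e_2(x).
   Up to the tail z these are the words m_0 ... m_n of x and e_1(x) followed by
   the word of x' of length n.  Their X-versions are at distance 0 in F^(n+1) X,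
   and a pair at distance 0 in F^n X stays within 2^(1-n) after both tails are
   replaced by z, so the two sequences of words converge to the same point. *)

From Stdlib Require Import Reals List Lra Lia ClassicalEpsilon.
From Coquelicot Require Import Coquelicot.
Import ListNotations.
Open Scope R_scope.

Definition corner {C : Type} (pT pL pR : C) (m : Mlet) : C :=
  match m with ma => pT | mb => pL | mc => pR end.

Definition third (m m' : Mlet) : Mlet :=
  match m, m' with
  | ma, mb | mb, ma => mc
  | ma, mc | mc, ma => mb
  | _, _ => ma
  end.

Record tri_pmetric {C : Type} (d : C -> C -> R) (pT pL pR : C) : Prop := {
  tpm_ge0 : forall x y, 0 <= d x y;
  tpm_le1 : forall x y, d x y <= 1;
  tpm_refl : forall x, d x x = 0;
  tpm_sym : forall x y, d x y = d y x;
  tpm_tri : forall x y z, d x z <= d x y + d y z;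
  tpm_TL : d pT pL = 1;
  tpm_LR : d pL pR = 1;
  tpm_TR : d pT pR = 1 }.

(* Closed form of the quotient distance between (m0, b) and (m, a) in M (x) C:
   a shortest chain either stays in one copy, jumps once between copies (cost 1),
   crosses the glued corners of the two copies, or detours through the third copy. *)
Definition glue_dist {C : Type} (d : C -> C -> R) (pT pL pR : C)
    (m0 : Mlet) (b : C) (m : Mlet) (a : C) : R :=
  if Mlet_eqb m0 m then d b a / 2
  else Rmin 1 (Rmin ((d b (corner pT pL pR m) + d a (corner pT pL pR m0)) / 2)
                    ((d b (corner pT pL pR (third m0 m)) + 1
                      + d a (corner pT pL pR (third m0 m))) / 2)).

Lemma Mlet_dec (m m' : Mlet) : {m = m'} + {m <> m'}.
Proof. decide equality. Qed.

Lemma Mlet_eqb_refl m : Mlet_eqb m m = true.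
Proof. destruct m; reflexivity. Qed.

Lemma Mlet_eqb_false m m' : m <> m' -> Mlet_eqb m m' = false.
Proof. destruct m, m'; simpl; congruence. Qed.

Lemma Mlet_eqb_sym m m' : Mlet_eqb m m' = Mlet_eqb m' m.
Proof. destruct m, m'; reflexivity. Qed.

Lemma third_sym m m' : third m m' = third m' m.
Proof. destruct m, m'; reflexivity. Qed.

Lemma third_neq_l m m' : m <> m' -> third m m' <> m.
Proof. destruct m, m'; simpl; congruence. Qed.

Lemma third_neq_r m m' : m <> m' -> third m m' <> m'.
Proof. destruct m, m'; simpl; congruence. Qed.

Lemma glue_rel_corner {C : Type} (pT pL pR : C) m0 m : m0 <> m ->
  glue_rel pT pL pR (m0, corner pT pL pR m) (m, corner pT pL pR m0).
Proof.
  intro Hm; unfold glue_rel, glued.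
  destruct m0, m; simpl; try congruence; intuition.
Qed.

Lemma Glb_Rbar_real_eq (P : R -> Prop) c :
  (forall r, P r -> c <= r) -> (exists r, P r /\ r <= c) -> real (Glb_Rbar P) = c.
Proof.
  intros Hlb [r [Hr Hrc]].
  destruct (Glb_Rbar_correct P) as [Hlow Hgreatest].
  assert (Hc : Rbar_le c (Glb_Rbar P)) by (apply Hgreatest; intros x Hx; apply Hlb; auto).
  assert (Hg : Rbar_le (Glb_Rbar P) r) by (apply Hlow; auto).
  destruct (Glb_Rbar P) as [g| |]; simpl in *; try contradiction; lra.
Qed.

Lemma glue_dist_congr {C1 C2 : Type} (d1 : C1 -> C1 -> R) p1T p1L p1R
    (d2 : C2 -> C2 -> R) p2T p2L p2R m0 b1 m a1 b2 a2 :
  d1 b1 a1 = d2 b2 a2 ->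
  (forall k, d1 b1 (corner p1T p1L p1R k) = d2 b2 (corner p2T p2L p2R k)) ->
  (forall k, d1 a1 (corner p1T p1L p1R k) = d2 a2 (corner p2T p2L p2R k)) ->
  glue_dist d1 p1T p1L p1R m0 b1 m a1 = glue_dist d2 p2T p2L p2R m0 b2 m a2.
Proof. intros Hba Hb Ha. unfold glue_dist. rewrite Hba, !Hb, !Ha. reflexivity. Qed.

Section Gluing.

Context {C : Type} (d : C -> C -> R) (pT pL pR : C) (Hd : tri_pmetric d pT pL pR).

Notation cn := (corner pT pL pR).
Notation gd := (glue_dist d pT pL pR).

Let d_ge0 := tpm_ge0 d pT pL pR Hd.
Let d_le1 := tpm_le1 d pT pL pR Hd.
Let d_refl := tpm_refl d pT pL pR Hd.
Let d_sym := tpm_sym d pT pL pR Hd.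
Let d_tri := tpm_tri d pT pL pR Hd.

Lemma corner_dist_neq m m' : m <> m' -> d (cn m) (cn m') = 1.
Proof.
  destruct Hd; intro Hm.
  destruct m, m'; simpl; try congruence; try assumption; rewrite d_sym; assumption.
Qed.

Lemma prod_dist_same m x y : prod_dist d (m, x) (m, y) = d x y / 2.
Proof. unfold prod_dist; simpl; rewrite Mlet_eqb_refl; reflexivity. Qed.

Lemma prod_dist_neq m x m' y : m <> m' -> prod_dist d (m, x) (m', y) = 1.
Proof. intro Hm; unfold prod_dist; simpl; rewrite Mlet_eqb_false; auto. Qed.

Lemma glue_dist_same m b a : gd m b m a = d b a / 2.
Proof. unfold glue_dist; rewrite Mlet_eqb_refl; reflexivity. Qed.

Lemma glue_dist_bounds m0 b m a : 0 <= gd m0 b m a <= 1.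
Proof.
  unfold glue_dist. destruct (Mlet_eqb m0 m).
  - pose proof (d_ge0 b a); pose proof (d_le1 b a); lra.
  - pose proof (d_ge0 b (cn m)); pose proof (d_ge0 a (cn m0)).
    pose proof (d_ge0 b (cn (third m0 m))); pose proof (d_ge0 a (cn (third m0 m))).
    unfold Rmin; repeat destruct Rle_dec; lra.
Qed.

Lemma glue_dist_le_corners m0 b m a : m0 <> m ->
  gd m0 b m a <= (d b (cn m) + d a (cn m0)) / 2.
Proof.
  intro Hm; unfold glue_dist; rewrite (Mlet_eqb_false _ _ Hm).
  unfold Rmin; repeat destruct Rle_dec; lra.
Qed.

Lemma glue_dist_ge_corners m0 b m a : m0 <> m ->
  Rmin (1/2) ((d b (cn m) + d a (cn m0)) / 2) <= gd m0 b m a.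
Proof.
  intro Hm; unfold glue_dist; rewrite (Mlet_eqb_false _ _ Hm).
  pose proof (d_ge0 b (cn m)); pose proof (d_ge0 a (cn m0)).
  pose proof (d_ge0 b (cn (third m0 m))); pose proof (d_ge0 a (cn (third m0 m))).
  unfold Rmin; repeat destruct Rle_dec; lra.
Qed.

Lemma glue_dist_corners m m' : m <> m' -> gd m (cn m) m' (cn m') = 1.
Proof.
  intro Hm. unfold glue_dist. rewrite (Mlet_eqb_false _ _ Hm).
  rewrite (corner_dist_neq m m'), (corner_dist_neq m' m) by congruence.
  rewrite (corner_dist_neq m (third m m')) by (apply not_eq_sym, third_neq_l; auto).
  rewrite (corner_dist_neq m' (third m m')) by (apply not_eq_sym, third_neq_r; auto).
  unfold Rmin; repeat destruct Rle_dec; lra.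
Qed.

Lemma glue_dist_lipschitz m0 b m a a' : gd m0 b m a <= gd m0 b m a' + d a a' / 2.
Proof.
  unfold glue_dist. destruct (Mlet_eqb m0 m).
  - pose proof (d_tri b a' a); rewrite (d_sym a' a) in *; lra.
  - pose proof (d_tri a a' (cn m0)); pose proof (d_tri a a' (cn (third m0 m))).
    pose proof (d_ge0 a a'). unfold Rmin; repeat destruct Rle_dec; lra.
Qed.

Lemma glue_dist_glue_rel m0 b x y : glue_rel pT pL pR x y ->
  gd m0 b (fst x) (snd x) = gd m0 b (fst y) (snd y).
Proof.
  assert (hLT : d pL pT = 1) by (rewrite d_sym; apply Hd).
  assert (hRL : d pR pL = 1) by (rewrite d_sym; apply Hd).
  assert (hRT : d pR pT = 1) by (rewrite d_sym; apply Hd).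
  pose proof (tpm_TL d pT pL pR Hd); pose proof (tpm_LR d pT pL pR Hd);
    pose proof (tpm_TR d pT pL pR Hd).
  pose proof (d_refl pT); pose proof (d_refl pL); pose proof (d_refl pR).
  pose proof (d_ge0 b pT); pose proof (d_ge0 b pL); pose proof (d_ge0 b pR).
  pose proof (d_le1 b pT); pose proof (d_le1 b pL); pose proof (d_le1 b pR).
  unfold glue_rel, glued.
  intros [-> | [ [[-> ->]|[[-> ->]|[-> ->]]] | [[-> ->]|[[-> ->]|[-> ->]]] ]];
    [reflexivity| | | | | |];
  destruct m0; unfold glue_dist; simpl;
  repeat match goal with h : d ?x ?y = _ |- context [d ?x ?y] => rewrite h end;
  unfold Rmin; repeat destruct Rle_dec; lra.
Qed.

(* [gd m0 b] is invariant under gluing and 1/2-Lipschitz inside a copy, so it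
   grows along a chain by at most the chain's cost. *)
Lemma glue_dist_chain m0 b : forall l x y, chain_ok pT pL pR x y l ->
  gd m0 b (fst y) (snd y) <= gd m0 b (fst x) (snd x) + chain_cost d l.
Proof.
  induction l as [|[[mu u] [mv v]] l IH]; intros x y Hc; simpl in *.
  - rewrite (glue_dist_glue_rel m0 b x y Hc); lra.
  - destruct Hc as [Hg Hc].
    specialize (IH _ _ Hc). simpl in IH.
    rewrite (glue_dist_glue_rel m0 b x (mu, u) Hg). simpl.
    assert (gd m0 b mv v <= gd m0 b mu u + prod_dist d (mu, u) (mv, v)).
    { destruct (Mlet_dec mu mv) as [<-|Hne].
      - rewrite prod_dist_same, (d_sym u). apply glue_dist_lipschitz.
      - rewrite prod_dist_neq by exact Hne.
        pose proof (glue_dist_bounds m0 b mv v); pose proof (glue_dist_bounds m0 b mu u); lra. }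
    lra.
Qed.

Lemma glue_dist_attained m0 b m a :
  exists l, chain_ok pT pL pR (m0, b) (m, a) l /\ chain_cost d l <= gd m0 b m a.
Proof.
  destruct (Mlet_dec m0 m) as [<-|Hm].
  - exists [((m0, b), (m0, a))]. split.
    + simpl; unfold glue_rel; auto.
    + simpl; rewrite glue_dist_same, prod_dist_same; lra.
  - set (m2 := third m0 m).
    assert (Hjump : exists l, chain_ok pT pL pR (m0, b) (m, a) l /\ chain_cost d l <= 1).
    { exists [((m0, b), (m, a))]. split; [simpl; unfold glue_rel; auto|].
      simpl; rewrite prod_dist_neq; auto; lra. }
    assert (Hdirect : exists l, chain_ok pT pL pR (m0, b) (m, a) l /\
                        chain_cost d l <= (d b (cn m) + d a (cn m0)) / 2).
    { exists [((m0, b), (m0, cn m)); ((m, cn m0), (m, a))]. split.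
      - simpl. split; [left; reflexivity|].
        split; [apply glue_rel_corner; auto|]. left; reflexivity.
      - simpl; rewrite !prod_dist_same, (d_sym (cn m0) a). lra. }
    assert (Hdetour : exists l, chain_ok pT pL pR (m0, b) (m, a) l /\
                        chain_cost d l <= (d b (cn m2) + 1 + d a (cn m2)) / 2).
    { exists [((m0, b), (m0, cn m2)); ((m2, cn m0), (m2, cn m)); ((m, cn m2), (m, a))].
      split.
      - simpl. split; [left; reflexivity|].
        split; [apply glue_rel_corner, not_eq_sym, third_neq_l; auto|].
        split; [apply glue_rel_corner, third_neq_r; auto|]. left; reflexivity.
      - simpl; rewrite !prod_dist_same, (d_sym (cn m2) a).
        rewrite corner_dist_neq by auto. lra. }
    unfold glue_dist; rewrite (Mlet_eqb_false _ _ Hm). fold m2.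
    unfold Rmin; repeat destruct Rle_dec; auto.
Qed.

Lemma qdist_glue_dist m0 b m a : qdist d pT pL pR (m0, b) (m, a) = gd m0 b m a.
Proof.
  apply Glb_Rbar_real_eq.
  - intros r [l [Hl ->]].
    pose proof (glue_dist_chain m0 b l _ _ Hl) as Hc; simpl in Hc.
    rewrite glue_dist_same, d_refl in Hc. lra.
  - destruct (glue_dist_attained m0 b m a) as [l [Hl Hle]].
    exists (chain_cost d l); eauto.
Qed.

Lemma glue_dist_tri m0 b m a m' c : gd m0 b m' c <= gd m0 b m a + gd m a m' c.
Proof.
  destruct (glue_dist_attained m a m' c) as [l [Hl Hle]].
  pose proof (glue_dist_chain m0 b l _ _ Hl); simpl in *. lra.
Qed.

Lemma glue_dist_sym m0 b m a : gd m0 b m a = gd m a m0 b.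
Proof.
  unfold glue_dist. rewrite Mlet_eqb_sym, third_sym. destruct (Mlet_eqb m m0).
  - rewrite d_sym; reflexivity.
  - f_equal. f_equal; f_equal; lra.
Qed.

Lemma glue_dist_corner_ge m0 b m : m0 <> m -> 1/2 <= gd m0 b m (cn m).
Proof.
  intro Hm. pose proof (glue_dist_ge_corners m0 b m (cn m) Hm) as Hge.
  rewrite (corner_dist_neq m m0) in Hge by auto. pose proof (d_ge0 b (cn m)).
  unfold Rmin in Hge; destruct Rle_dec; lra.
Qed.

Lemma glue_dist_eq0_neq m0 b m a : m0 <> m -> gd m0 b m a = 0 ->
  d b (cn m) = 0 /\ d a (cn m0) = 0.
Proof.
  intros Hm H0. pose proof (glue_dist_ge_corners m0 b m a Hm) as Hge. rewrite H0 in Hge.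
  pose proof (d_ge0 b (cn m)); pose proof (d_ge0 a (cn m0)).
  unfold Rmin in Hge; destruct Rle_dec; lra.
Qed.

End Gluing.

Lemma corner_repeat {C : Type} (pT pL pR : C) k m :
  corner (repeat ma k, pT) (repeat mb k, pL) (repeat mc k, pR) m
  = (repeat m k, corner pT pL pR m).
Proof. destruct m; reflexivity. Qed.

Lemma corner_nil {C : Type} (pT pL pR : C) m :
  corner ([] : list Mlet, pT) ([], pL) ([], pR) m = ([], corner pT pL pR m).
Proof. exact (corner_repeat pT pL pR 0 m). Qed.

Section Iterates.

Context {C : Type} (d : C -> C -> R) (pT pL pR : C) (Hd : tri_pmetric d pT pL pR).

Notation D := (iter_dist d pT pL pR).
Notation cT k := (repeat ma k, pT).
Notation cL k := (repeat mb k, pL).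
Notation cR k := (repeat mc k, pR).

Lemma tri_pmetric_iter_dist k : tri_pmetric (D k) (cT k) (cL k) (cR k).
Proof.
  induction k as [|k IHk].
  - destruct Hd; constructor; simpl; auto.
  - assert (HS : forall p q, D (S k) p q = glue_dist (D k) (cT k) (cL k) (cR k)
              (hd ma (fst p)) (tl (fst p), snd p) (hd ma (fst q)) (tl (fst q), snd q))
      by (intros p q; apply qdist_glue_dist, IHk).
    constructor; intros; rewrite ?HS.
    + apply glue_dist_bounds, IHk.
    + apply glue_dist_bounds, IHk.
    + rewrite glue_dist_same, (tpm_refl _ _ _ _ IHk). lra.
    + apply glue_dist_sym, IHk.
    + apply glue_dist_tri, IHk.
    + exact (glue_dist_corners _ _ _ _ IHk ma mb ltac:(discriminate)).
    + exact (glue_dist_corners _ _ _ _ IHk mb mc ltac:(discriminate)).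
    + exact (glue_dist_corners _ _ _ _ IHk ma mc ltac:(discriminate)).
Qed.

Lemma iter_dist_S k p q : D (S k) p q = glue_dist (D k) (cT k) (cL k) (cR k)
  (hd ma (fst p)) (tl (fst p), snd p) (hd ma (fst q)) (tl (fst q), snd q).
Proof. apply qdist_glue_dist, tri_pmetric_iter_dist. Qed.

Lemma iter_dist_cons k m w y w' y' :
  D (S k) (m :: w, y) (m :: w', y') = D k (w, y) (w', y') / 2.
Proof. rewrite iter_dist_S. apply glue_dist_same. Qed.

Lemma iter_dist_app u : forall k w y w' y',
  D (length u + k) (u ++ w, y) (u ++ w', y') = D k (w, y) (w', y') * (1/2) ^ length u.
Proof.
  induction u as [|m u IHu]; intros.
  - simpl. lra.
  - cbn [length app Nat.add pow]. rewrite iter_dist_cons, IHu. lra.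
Qed.

End Iterates.

(* Two words at distance 0 in F^n C agree letter by letter until they enter
   glued corners of adjacent copies, and near a corner the tails no longer
   matter; so replacing both tails by the same point of C' costs O(2^-n). *)
Section Transfer.

Context {C C' : Type} (d : C -> C -> R) (pT pL pR : C) (Hd : tri_pmetric d pT pL pR)
  (d' : C' -> C' -> R) (qT qL qR : C') (Hd' : tri_pmetric d' qT qL qR) (z : C').

Notation D := (iter_dist d pT pL pR).
Notation D' := (iter_dist d' qT qL qR).

Lemma iter_dist_transfer_corner n : forall w y m,
  D n (w, y) (repeat m n, corner pT pL pR m) = 0 ->
  D' n (w, z) (repeat m n, corner qT qL qR m) <= (1/2) ^ n.
Proof.
  induction n as [|n IHn]; intros w y m H0.
  - apply (tpm_le1 _ _ _ _ Hd').
  - rewrite (iter_dist_S _ _ _ _ Hd) in H0. rewrite (iter_dist_S _ _ _ _ Hd').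
    cbn [fst snd hd tl repeat] in *.
    destruct (Mlet_dec (hd ma w) m) as [<-|Hm].
    + rewrite (glue_dist_same (D n)) in H0. rewrite (glue_dist_same (D' n)).
      specialize (IHn (tl w) y (hd ma w) ltac:(lra)). simpl. lra.
    + exfalso. rewrite <- corner_repeat in H0.
      pose proof (glue_dist_corner_ge _ _ _ _ (tri_pmetric_iter_dist _ _ _ _ Hd n)
                    (hd ma w) (tl w, y) m Hm).
      lra.
Qed.

Lemma iter_dist_transfer n : forall w y w' y',
  D n (w, y) (w', y') = 0 -> D' n (w, z) (w', z) <= 2 * (1/2) ^ n.
Proof.
  induction n as [|n IHn]; intros w y w' y' H0.
  - simpl. rewrite (tpm_refl _ _ _ _ Hd'). lra.
  - rewrite (iter_dist_S _ _ _ _ Hd) in H0. rewrite (iter_dist_S _ _ _ _ Hd').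
    cbn [fst snd] in *.
    destruct (Mlet_dec (hd ma w) (hd ma w')) as [Heq|Hm].
    + rewrite Heq, (glue_dist_same (D n)) in H0. rewrite Heq, (glue_dist_same (D' n)).
      assert (Htl : D n (tl w, y) (tl w', y') = 0) by lra.
      specialize (IHn _ _ _ _ Htl). simpl. lra.
    + destruct (glue_dist_eq0_neq _ _ _ _ (tri_pmetric_iter_dist _ _ _ _ Hd n)
                  _ _ _ _ Hm H0) as [Hw Hw'].
      rewrite corner_repeat in Hw, Hw'.
      pose proof (iter_dist_transfer_corner _ _ _ _ Hw).
      pose proof (iter_dist_transfer_corner _ _ _ _ Hw').
      pose proof (glue_dist_le_corners (D' n) (repeat ma n, qT) (repeat mb n, qL)
                    (repeat mc n, qR) _ (tl w, z) _ (tl w', z) Hm) as Hle.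
      rewrite !corner_repeat in Hle. simpl. lra.
Qed.

End Transfer.

Lemma tri_pmetric_dI : tri_pmetric dI iT iL iR.
Proof.
  constructor; unfold dI.
  - intros [] []; simpl; lra.
  - intros [] []; simpl; lra.
  - intros []; simpl; lra.
  - intros [] []; simpl; lra.
  - intros [] [] []; simpl; lra.
  - simpl; lra.
  - simpl; lra.
  - simpl; lra.
Qed.

Notation DI := (iter_dist dI iT iL iR).

Lemma tri_pmetric_DI N : tri_pmetric (DI N) (repeat ma N, iT) (repeat mb N, iL) (repeat mc N, iR).
Proof. apply tri_pmetric_iter_dist, tri_pmetric_dI. Qed.

Lemma embed_S N w t : (length w <= S N)%nat ->
  embed (S N) (w, t) = (hd (bang_letter t) w :: fst (embed N (tl w, t)), t).
Proof.
  intro Hw. unfold embed; cbn [fst snd]. destruct w; cbn [length hd tl app].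
  - rewrite !Nat.sub_0_r. reflexivity.
  - reflexivity.
Qed.

Lemma embed_corner N m : embed N ([], corner iT iL iR m) = (repeat m N, corner iT iL iR m).
Proof. unfold embed; cbn [fst snd length app]. rewrite Nat.sub_0_r. destruct m; reflexivity. Qed.

Lemma embed_full N w t : length w = N -> embed N (w, t) = (w, t).
Proof. intros <-. unfold embed; cbn [fst snd]. rewrite Nat.sub_diag, app_nil_r. reflexivity. Qed.

Lemma length_tl {A : Type} (w : list A) : length (tl w) = pred (length w).
Proof. destruct w; reflexivity. Qed.

Lemma iter_dist_embed_S N : forall p q,
  (length (fst p) <= N)%nat -> (length (fst q) <= N)%nat ->
  DI (S N) (embed (S N) p) (embed (S N) q) = DI N (embed N p) (embed N q).
Proof.
  induction N as [|N IHN]; intros [w t] [w' t'] Hp Hq; cbn [fst] in Hp, Hq.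
  - destruct w; [|simpl in Hp; lia]. destruct w'; [|simpl in Hq; lia].
    rewrite (iter_dist_S _ _ _ _ tri_pmetric_dI).
    destruct t, t'; unfold glue_dist, dI, Rmin; cbn; repeat destruct Rle_dec; lra.
  - rewrite (embed_S (S N) w), (embed_S (S N) w'), (embed_S N w), (embed_S N w') by lia.
    rewrite !(iter_dist_S _ _ _ _ tri_pmetric_dI). cbn [fst snd hd tl].
    assert (Htl : (length (tl w) <= N)%nat /\ (length (tl w') <= N)%nat)
      by (rewrite !length_tl; lia).
    apply glue_dist_congr; [|intro k..]; rewrite ?corner_repeat, <- ?embed_corner;
      apply IHN; simpl; lia.
Qed.

Lemma dG_embed N p q : (length (fst p) <= N)%nat -> (length (fst q) <= N)%nat ->
  dG p q = DI N (embed N p) (embed N q).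
Proof.
  intros Hp Hq. unfold dG.
  set (N0 := Nat.max (length (fst p)) (length (fst q))).
  assert (HN : (N0 <= N)%nat) by lia.
  induction HN as [|N HN IH]; [reflexivity|].
  rewrite IH, iter_dist_embed_S; auto; lia.
Qed.

Lemma tri_pmetric_dG : tri_pmetric dG ([], iT) ([], iL) ([], iR).
Proof.
  constructor; intros.
  - apply (tpm_ge0 _ _ _ _ (tri_pmetric_DI _)).
  - apply (tpm_le1 _ _ _ _ (tri_pmetric_DI _)).
  - apply (tpm_refl _ _ _ _ (tri_pmetric_DI _)).
  - set (N := Nat.max (length (fst x)) (length (fst y))).
    rewrite (dG_embed N x y), (dG_embed N y x) by lia.
    apply (tpm_sym _ _ _ _ (tri_pmetric_DI _)).
  - set (N := Nat.max (length (fst x)) (Nat.max (length (fst y)) (length (fst z)))).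
    rewrite (dG_embed N x z), (dG_embed N x y), (dG_embed N y z) by lia.
    apply (tpm_tri _ _ _ _ (tri_pmetric_DI _)).
  - apply tri_pmetric_dI.
  - apply tri_pmetric_dI.
  - apply tri_pmetric_dI.
Qed.

Lemma dG_cons m w t m' w' t' :
  dG (m :: w, t) (m' :: w', t') = glue_dist dG ([], iT) ([], iL) ([], iR) m (w, t) m' (w', t').
Proof.
  set (N := Nat.max (length w) (length w')).
  rewrite (dG_embed (S N)), !embed_S by (simpl; lia).
  rewrite (iter_dist_S _ _ _ _ tri_pmetric_dI). cbn [fst snd hd tl].
  unfold G. apply glue_dist_congr; [|intro k..];
    rewrite ?(corner_repeat _ _ _ N), ?corner_nil, <- ?embed_corner;
    symmetry; apply dG_embed; simpl; lia.
Qed.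

Lemma is_lim_seq_squeeze0 (a b : nat -> R) :
  (forall n, 0 <= a n <= b n) -> is_lim_seq b 0 -> is_lim_seq a 0.
Proof.
  intros Hab Hb. apply (is_lim_seq_le_le (fun _ => 0) a b); auto.
  apply is_lim_seq_const.
Qed.

Lemma is_lim_seq_scal_l0 (c : R) (a : nat -> R) :
  is_lim_seq a 0 -> is_lim_seq (fun n => c * a n) 0.
Proof.
  intro Ha. replace (Finite 0) with (Rbar_mult c 0) by (simpl; f_equal; ring).
  apply is_lim_seq_scal_l, Ha.
Qed.

Lemma is_lim_seq_half_pow (c : R) : is_lim_seq (fun n => c * (1/2) ^ n) 0.
Proof. apply is_lim_seq_scal_l0, is_lim_seq_geom. rewrite Rabs_right; lra. Qed.

Lemma real_Lim_seq_eq0 (a : nat -> R) : is_lim_seq a 0 -> real (Lim_seq a) = 0.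
Proof. intro Ha. rewrite (is_lim_seq_unique _ _ Ha). reflexivity. Qed.

Lemma LimSup_LimInf_seq_unit (a : nat -> R) : (forall n, 0 <= a n <= 1) ->
  exists s i, LimSup_seq a = Finite s /\ LimInf_seq a = Finite i /\ 0 <= i <= s.
Proof.
  intro Ha.
  assert (Hsup : Rbar_le (LimSup_seq a) (LimSup_seq (fun _ => 1)))
    by (apply LimSup_le; exists 0%nat; intros; apply Ha).
  assert (Hinf : Rbar_le (LimInf_seq (fun _ => 0)) (LimInf_seq a))
    by (apply LimInf_le; exists 0%nat; intros; apply Ha).
  rewrite LimSup_seq_const in Hsup. rewrite LimInf_seq_const in Hinf.
  pose proof (LimSup_LimInf_seq_le a) as Hle.
  destruct (LimSup_seq a) as [s| |], (LimInf_seq a) as [i| |]; simpl in *;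
    try contradiction.
  exists s, i. auto.
Qed.

Lemma real_Lim_seq_ge0 (a : nat -> R) : (forall n, 0 <= a n <= 1) -> 0 <= real (Lim_seq a).
Proof.
  intro Ha. destruct (LimSup_LimInf_seq_unit a Ha) as [s [i [Hs [Hi Hsi]]]].
  unfold Lim_seq. rewrite Hs, Hi. simpl. lra.
Qed.

(* [Lim_seq] is (LimSup + LimInf) / 2 even when the limit does not exist; for a
   nonnegative sequence it is 0 only when both vanish. *)
Lemma is_lim_seq_of_real_Lim_seq_eq0 (a : nat -> R) :
  (forall n, 0 <= a n <= 1) -> real (Lim_seq a) = 0 -> is_lim_seq a 0.
Proof.
  intros Ha H0. destruct (LimSup_LimInf_seq_unit a Ha) as [s [i [Hs [Hi Hsi]]]].
  unfold Lim_seq in H0. rewrite Hs, Hi in H0. simpl in H0.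
  assert (s = 0 /\ i = 0) as [-> ->] by lra.
  assert (Hex : ex_lim_seq a) by (apply ex_lim_LimSup_LimInf_seq; rewrite Hs, Hi; reflexivity).
  pose proof (Lim_seq_correct a Hex) as Hc.
  unfold Lim_seq in Hc. rewrite Hs, Hi in Hc. simpl in Hc.
  replace (Finite 0) with (Finite ((0 + 0) / 2)) by (f_equal; lra). exact Hc.
Qed.

Lemma dG_bounds p q : 0 <= dG p q <= 1.
Proof. split; [apply (tpm_ge0 _ _ _ _ tri_pmetric_dG) | apply (tpm_le1 _ _ _ _ tri_pmetric_dG)]. Qed.

Lemma dS_ge0 u v : 0 <= dS u v.
Proof. apply real_Lim_seq_ge0. intro; apply dG_bounds. Qed.

Lemma dS_eq0 u v : is_lim_seq (fun n => dG (u n) (v n)) 0 -> dS u v = 0.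
Proof. apply real_Lim_seq_eq0. Qed.

Lemma is_lim_seq_dG_of_dS_eq0 u v y : dS u y = 0 -> dS v y = 0 ->
  is_lim_seq (fun n => dG (u n) (v n)) 0.
Proof.
  intros Hu Hv.
  apply is_lim_seq_of_real_Lim_seq_eq0 in Hu, Hv; try (intro; apply dG_bounds).
  apply (is_lim_seq_squeeze0 _ (fun n => dG (u n) (y n) + dG (v n) (y n))).
  - intro n. split; [apply dG_bounds|].
    rewrite (tpm_sym _ _ _ _ tri_pmetric_dG (v n)). apply tri_pmetric_dG.
  - replace (Finite 0) with (Finite (0 + 0)) by (f_equal; lra).
    apply is_lim_seq_plus'; auto.
Qed.

Lemma qdist_eq0_of_chain {C : Type} (d : C -> C -> R) (pT pL pR : C) p q l :
  (forall x y, 0 <= d x y) -> chain_ok pT pL pR p q l -> chain_cost d l = 0 ->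
  qdist d pT pL pR p q = 0.
Proof.
  intros Hd Hl Hcost. apply Glb_Rbar_real_eq; [|exists 0; split; [exists l|]; auto; lra].
  intros r [l' [_ ->]].
  induction l' as [|[x y] l' IH]; simpl; [lra|].
  unfold prod_dist. destruct (Mlet_eqb _ _); pose proof (Hd (snd x) (snd y)); lra.
Qed.

Lemma corner_S_apply k n : corner sT sL sR k n = @corner G ([], iT) ([], iL) ([], iR) k.
Proof. destruct k; reflexivity. Qed.

(* Either m = m' and u, v are asymptotically close, or u and v tend to the
   corners along which the copies m and m' are glued. *)
Lemma dMS_eq0_of_psi m u m' v :
  is_lim_seq (fun n => dG (psi (m, u) n) (psi (m', v) n)) 0 -> dMS (m, u) (m', v) = 0.
Proof.
  intro Hlim.
  assert (Hcons : forall n, dG (psi (m, u) n) (psi (m', v) n)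
                    = glue_dist dG ([], iT) ([], iL) ([], iR) m (u n) m' (v n))
    by (intro n; unfold psi; simpl; destruct (u n), (v n); apply dG_cons).
  destruct (Mlet_dec m m') as [<-|Hm].
  - apply (qdist_eq0_of_chain _ _ _ _ _ _ [((m, u), (m, v))] dS_ge0);
      [simpl; split; left; reflexivity|].
    simpl. rewrite prod_dist_same, dS_eq0; [lra|].
    apply (is_lim_seq_ext (fun n => 2 * dG (psi (m, u) n) (psi (m, v) n))).
    + intro n. rewrite Hcons, glue_dist_same. lra.
    + apply is_lim_seq_scal_l0, Hlim.
  - assert (Hcorner : forall n, dG (u n) (corner sT sL sR m' n) + dG (corner sT sL sR m n) (v n)
                        <= 4 * dG (psi (m, u) n) (psi (m', v) n)).
    { intro n. rewrite Hcons, (tpm_sym _ _ _ _ tri_pmetric_dG _ (v n)).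
      pose proof (glue_dist_ge_corners _ _ _ _ tri_pmetric_dG m (u n) m' (v n) Hm) as Hge.
      pose proof (dG_bounds (u n) (corner sT sL sR m' n)).
      pose proof (dG_bounds (v n) (corner sT sL sR m n)).
      rewrite !corner_S_apply in *. unfold Rmin in Hge. destruct Rle_dec; lra. }
    assert (Hsum : is_lim_seq (fun n => dG (u n) (corner sT sL sR m' n)
                                      + dG (corner sT sL sR m n) (v n)) 0).
    { apply (is_lim_seq_squeeze0 _ (fun n => 4 * dG (psi (m, u) n) (psi (m', v) n)));
        [|apply is_lim_seq_scal_l0, Hlim].
      intro n. split; [|apply Hcorner].
      apply Rplus_le_le_0_compat; apply dG_bounds. }
    apply (qdist_eq0_of_chain _ _ _ _ _ _
             [((m, u), (m, corner sT sL sR m')); ((m', corner sT sL sR m), (m', v))] dS_ge0).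
    + simpl. split; [left; reflexivity|].
      split; [apply glue_rel_corner, Hm | left; reflexivity].
    + simpl. rewrite !prod_dist_same, !dS_eq0; [lra| |];
        refine (is_lim_seq_squeeze0 _ _ _ Hsum); intro n;
        pose proof (dG_bounds (u n) (corner sT sL sR m' n));
        pose proof (dG_bounds (corner sT sL sR m n) (v n)); lra.
Qed.

Lemma s_map_eq0 y m v : cauchyG v -> dS (psi (m, v)) y = 0 -> dMS (s_map y) (m, v) = 0.
Proof.
  intros Hv Hy.
  assert (Hs : dS (psi (s_map y)) y = 0)
    by exact (proj2 (epsilon_spec (inhabits (ma, sT))
                       (fun p => cauchyG (snd p) /\ dS (psi p) y = 0)
                       (ex_intro _ (m, v) (conj Hv Hy)))).
  destruct (s_map y) as [m0 u].
  apply dMS_eq0_of_psi, (is_lim_seq_dG_of_dS_eq0 _ _ y); assumption.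
Qed.

Lemma word_length M n : length (word M n) = n.
Proof. unfold word. rewrite length_map, length_seq. reflexivity. Qed.

Lemma word_app M n k : (n <= k)%nat -> word M k = word M n ++ map M (seq n (k - n)).
Proof.
  intro Hnk. unfold word. replace k with (n + (k - n))%nat at 1 by lia.
  rewrite seq_app, map_app. reflexivity.
Qed.

Lemma dG_theta_le z M n k : (n <= k)%nat -> dG (theta z M n) (theta z M k) <= (1/2) ^ n.
Proof.
  intro Hnk. unfold theta.
  rewrite (dG_embed k), (embed_full k (word M k)) by (simpl; rewrite ?word_length; lia).
  unfold embed; cbn [fst snd]. rewrite word_length, (word_app M n k Hnk).
  replace k with (length (word M n) + (k - n))%nat at 1 by (rewrite word_length; lia).
  rewrite (iter_dist_app _ _ _ _ tri_pmetric_dI), word_length.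
  pose proof (tpm_le1 _ _ _ _ (tri_pmetric_DI (k - n))
                (repeat (bang_letter z) (k - n), z) (map M (seq n (k - n)), z)).
  pose proof (pow_le (1/2) n ltac:(lra)). nra.
Qed.

Lemma cauchyG_theta z M : cauchyG (theta z M).
Proof.
  intros eps Heps.
  destruct (pow_lt_1_zero (1/2) ltac:(rewrite Rabs_right; lra) eps Heps) as [N HN].
  exists N. intros n k Hn Hk.
  destruct (Nat.le_ge_cases n k) as [Hnk|Hkn].
  - pose proof (dG_theta_le z M n k Hnk). pose proof (HN n Hn).
    pose proof (Rle_abs ((1/2) ^ n)). lra.
  - rewrite (tpm_sym _ _ _ _ tri_pmetric_dG).
    pose proof (dG_theta_le z M k n Hkn). pose proof (HN k Hk).
    pose proof (Rle_abs ((1/2) ^ k)). lra.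
Qed.

Lemma chi_S {X : Type} (e : X -> Mlet * X) n : forall x,
  chi e x (S n) = (fst (e x) :: fst (chi e (snd (e x)) n), snd (chi e (snd (e x)) n)).
Proof.
  induction n as [|n IHn]; intro x; [reflexivity|].
  change (chi e x (S (S n))) with
    (let p := chi e x (S n) in (fst p ++ [fst (e (snd p))], snd (e (snd p)))).
  rewrite IHn. reflexivity.
Qed.

Lemma tri_pmetric_tdist (X : TriMet) : tri_pmetric (tdist X) (tT X) (tL X) (tR X).
Proof.
  constructor; try apply X.
  intro x; apply tdist_eq0; reflexivity.
Qed.

Section Coalgebra.

Context (X : TriMet) (e : X -> Mlet * X) (ch : X -> (nat -> Mlet) * (nat -> X)).
Hypothesis Hch : forall (x : X) (n : nat),
  iter_dist (tdist X) (tT X) (tL X) (tR X) n (chi e x n) (word (fst (ch x)) n, snd (ch x) n) = 0.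

Notation DX := (iter_dist (tdist X) (tT X) (tL X) (tR X)).

Lemma iter_dist_word_unfold x n :
  DX (S n) (word (fst (ch x)) (S n), snd (ch x) (S n))
     (fst (e x) :: word (fst (ch (snd (e x)))) n, snd (ch (snd (e x))) n) = 0.
Proof.
  pose proof (tri_pmetric_iter_dist _ _ _ _ (tri_pmetric_tdist X) (S n)) as HD.
  pose proof (Hch x (S n)) as Hx. pose proof (Hch (snd (e x)) n) as Hx'.
  rewrite chi_S in Hx. destruct (chi e (snd (e x)) n) as [w y]. cbn [fst snd] in Hx, Hx'.
  assert (Hcons : DX (S n) (fst (e x) :: w, y)
             (fst (e x) :: word (fst (ch (snd (e x)))) n, snd (ch (snd (e x))) n) = 0)
    by (rewrite (iter_dist_cons _ _ _ _ (tri_pmetric_tdist X)), Hx'; lra).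
  pose proof (tpm_tri _ _ _ _ HD (word (fst (ch x)) (S n), snd (ch x) (S n))
                (fst (e x) :: w, y)
                (fst (e x) :: word (fst (ch (snd (e x)))) n, snd (ch (snd (e x))) n)).
  pose proof (tpm_ge0 _ _ _ _ HD (word (fst (ch x)) (S n), snd (ch x) (S n))
                (fst (e x) :: word (fst (ch (snd (e x)))) n, snd (ch (snd (e x))) n)).
  rewrite (tpm_sym _ _ _ _ HD _ (fst (e x) :: w, y)), Hx, Hcons in *. lra.
Qed.

Lemma dG_theta_unfold z x n :
  dG (psi (fst (e x), theta z (fst (ch (snd (e x))))) n) (theta z (fst (ch x)) n)
  <= 2 * (1/2) ^ n.
Proof.
  unfold psi, theta; cbn [fst snd].
  assert (Hshift : dG (fst (e x) :: word (fst (ch (snd (e x)))) n, z)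
                      (word (fst (ch x)) (S n), z) <= (1/2) ^ n).
  { rewrite (dG_embed (S n)), !embed_full by (cbn [fst length]; rewrite ?word_length; lia).
    rewrite (tpm_sym _ _ _ _ (tri_pmetric_DI (S n))).
    pose proof (iter_dist_transfer _ _ _ _ (tri_pmetric_tdist X) _ _ _ _ tri_pmetric_dI z
                  (S n) _ _ _ _ (iter_dist_word_unfold x n)).
    change ((1/2) ^ S n) with (1/2 * (1/2) ^ n) in *. lra. }
  pose proof (dG_theta_le z (fst (ch x)) n (S n) ltac:(lia)).
  pose proof (tpm_tri _ _ _ _ tri_pmetric_dG (fst (e x) :: word (fst (ch (snd (e x)))) n, z)
                (word (fst (ch x)) (S n), z) (word (fst (ch x)) n, z)).
  rewrite (tpm_sym _ _ _ _ tri_pmetric_dG (word (fst (ch x)) (S n), z)) in *.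
  unfold theta in *. lra.
Qed.

End Coalgebra.

Theorem mainTheorem6 (X : TriMet) (e : X -> Mlet * X) (He : is_coalgebra X e)
  (z : Ipt) (ch : X -> (nat -> Mlet) * (nat -> X))
  (Hch : forall (x : X) (n : nat),
     iter_dist (tdist X) (tT X) (tL X) (tR X) n
       (chi e x n) (word (fst (ch x)) n, snd (ch x) n) = 0) :
  forall x : X,
    dMS (s_map (f_map z ch x)) (fst (e x), f_map z ch (snd (e x))) = 0.
Proof.
  intro x. apply s_map_eq0; [apply cauchyG_theta|].
  apply dS_eq0, (is_lim_seq_squeeze0 _ (fun n => 2 * (1/2) ^ n)).
  - intro n. split; [apply dG_bounds | exact (dG_theta_unfold X e ch Hch z x n)].
  - apply is_lim_seq_half_pow.
Qed.
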